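(* Consider the system on an Erdős random graph process on $N\ge2$ nodes with noise level $\eta\in(0,1]$. Then in the Markov chain of states $x(k)\in\{\pm1\}^N$, the all-$(+1)$ state and the all-$(-1)$ state are absorbing, and every other state is transient.
   Context: Erdős random graph process: at each time $k$, the graph $G(k)$ on nodes $V=\{1,\dots,N\}$ is a simple undirected graph in which each of the $N(N-1)/2$ possible edges is present independently with probability $1/2$; graphs at different times are independent, and independent of the noises and of $x(0)$. Each node carries $x_i(k)\in\{+1,-1\}$. The neighborhood $N_i(k)$ consists of $i$ and all nodes adjacent to $i$ in $G(k)$; $v_i(k)=\frac{1}{|N_i(k)|}\sum_{j\in N_i(k)}x_j(k)$. Update: $x_i(k+1)=\operatorname{sign}[v_i(k)+\xi_i(k)]$ with $\xi_i(k)$ i.i.d. uniform on $[-\eta,\eta]$ across $i,k$. A state is absorbing if its one-step transition probability to itself is one; transient if, starting from it, it reappears with probability strictly less than one. *)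

From HB Require Import structures.
From mathcomp Require Import all_boot all_order all_algebra.
Set Implicit Arguments. Unset Strict Implicit. Unset Printing Implicit Defensive.
Import Order.TTheory GRing.Theory Num.Theory.
Local Open Scope ring_scope.

(* A state x in {+1,-1}^N: true encodes +1, false encodes -1. *)
Definition state (N : nat) := {ffun 'I_N -> bool}.

Definition spin (R : realFieldType) (b : bool) : R := if b then 1 else -1.

Definition all_plus (N : nat) : state N := [ffun _ => true].
Definition all_minus (N : nat) : state N := [ffun _ => false].

(* A simple undirected graph on 'I_N is encoded by its edge set, a set of
   pairs (i,j) with i < j.  Each such pair is an edge independently with
   probability 1/2, i.e. the graph is uniformly distributed over all such sets. *)
Definition upper_pairs (N : nat) : {set 'I_N * 'I_N} :=
  [set p : 'I_N * 'I_N | (val p.1 < val p.2)%N].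

Definition simple_graphs (N : nat) : {set {set 'I_N * 'I_N}} :=
  [set E : {set 'I_N * 'I_N} | E \subset upper_pairs N].

Definition adj (N : nat) (E : {set 'I_N * 'I_N}) (i j : 'I_N) : bool :=
  ((i, j) \in E) || ((j, i) \in E).

Definition nbhd (N : nat) (E : {set 'I_N * 'I_N}) (i : 'I_N) : {set 'I_N} :=
  [set j | (j == i) || adj E i j].

Definition vloc (R : realFieldType) (N : nat) (E : {set 'I_N * 'I_N})
    (x : state N) (i : 'I_N) : R :=
  (\sum_(j in nbhd E i) spin R (x j)) / (#|nbhd E i|)%:R.

(* P(v + xi > 0) for xi uniform on [-eta, eta]; the event v + xi = 0 has
   probability zero. *)
Definition pplus (R : realFieldType) (eta v : R) : R :=
  if v <= - eta then 0 else if eta <= v then 1 else (eta + v) / (2 * eta).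

Definition trans (R : realFieldType) (N : nat) (eta : R) (x y : state N) : R :=
  (#|simple_graphs N|%:R)^-1 *
  \sum_(E in simple_graphs N)
     \prod_(i : 'I_N)
        (if y i then pplus eta (vloc R E x i) else 1 - pplus eta (vloc R E x i)).

(* taboo probabilities: taboo eta x n z = probability, starting at x at time 0,
   that x(n+1) = z and x(k) <> x for all 1 <= k <= n. *)
Fixpoint taboo (R : realFieldType) (N : nat) (eta : R) (x : state N) (n : nat)
    (z : state N) : R :=
  match n with
  | 0 => trans eta x z
  | n'.+1 => \sum_(w : state N | w != x) taboo eta x n' w * trans eta w z
  end.

Definition return_within (R : realFieldType) (N : nat) (eta : R) (x : state N)
    (n : nat) : R :=
  \sum_(m < n) taboo eta x m x.

Definition absorbing (R : realFieldType) (N : nat) (eta : R) (x : state N) : Prop :=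
  trans eta x x = 1.

(* transient: the probability of ever returning (the supremum of the
   nondecreasing sequence return_within) is strictly less than one *)
Definition transient (R : realFieldType) (N : nat) (eta : R) (x : state N) : Prop :=
  exists c : R, c < 1 /\ forall n : nat, return_within eta x n <= c.

From HB Require Import structures.
From mathcomp Require Import all_boot all_order all_algebra.
From mathcomp Require Import lra.
Set Implicit Arguments. Unset Strict Implicit. Unset Printing Implicit Defensive.
Import Order.TTheory GRing.Theory Num.Theory.
Local Open Scope ring_scope.

(* Consensus: in a constant state every local average equals the common spin
   +-1, and since eta <= 1 the noise can never flip a node, so both consensus
   states are absorbing.
   Other states: the complete graph has positive probability, and on it every
   node sees the same global average a; according to the position of a, all
   nodes jump together with positive probability to all-minus (a <= -eta) or
   to all-plus (a > -eta).
   Finally, a general fact about taboo probabilities: if from x the chain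
   enters in one step, with probability p > 0, an absorbing state t <> x, then
   the probability of ever returning to x is at most 1 - p, so x is
   transient. *)

Section Kernel.
Variables (R : realFieldType) (N : nat) (eta : R).

(* Probability that a node ends in state b when it ends at +1 with
   probability p; trans is an average of products of such factors. *)
Definition bit_prob (p : R) (b : bool) : R := if b then p else 1 - p.

(* pplus is a probability for every eta: its last branch is only reached
   when -eta < v < eta, which forces eta > 0. *)
Lemma pplus_bounds (v : R) : 0 <= pplus eta v <= 1.
Proof.
rewrite /pplus; case: ifP => [_|/negbT]; first by rewrite lexx ler01.
case: ifP => [_ _|/negbT]; first by rewrite ler01 lexx.
rewrite -!ltNge => lt_v_eta lt_Neta_v.
have eta2_gt0 : 0 < 2 * eta by lra.
rewrite divr_ge0 ?ler_pdivrMr //=; lra.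
Qed.

Lemma bit_prob_ge0 (v : R) (b : bool) : 0 <= bit_prob (pplus eta v) b.
Proof. by case/andP: (pplus_bounds v); case: b => //= _; rewrite subr_ge0. Qed.

Lemma card_simple_graphs_gt0 : (0 < #|simple_graphs N|)%N.
Proof. by apply/card_gt0P; exists set0; rewrite inE sub0set. Qed.

Lemma trans_ge0 (x y : state N) : 0 <= trans eta x y.
Proof.
rewrite /trans mulr_ge0 ?invr_ge0 ?ler0n // sumr_ge0 // => E _.
by apply: prodr_ge0 => i _; exact: (bit_prob_ge0 _ (y i)).
Qed.

(* Each row of trans sums to 1: for a fixed graph, the sum over y of the
   product of the node factors factorizes into a product of sums p + (1-p). *)
Lemma trans_sum (x : state N) : \sum_y trans eta x y = 1.
Proof.
rewrite /trans -mulr_sumr exchange_big /=.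
rewrite (eq_bigr (fun _ => 1)) ?sumr_const; last first.
  move=> E _.
  rewrite -(bigA_distr_bigA (fun i b => bit_prob (pplus eta (vloc R E x i)) b)).
  by apply: big1 => i _; rewrite big_bool /= addrC subrK.
by rewrite mulVf // pnatr_eq0 -lt0n card_simple_graphs_gt0.
Qed.

(* A single transition has probability at most the whole row. *)
Lemma trans_le1 (x y : state N) : trans eta x y <= 1.
Proof.
rewrite -(trans_sum x) (bigD1 y) //= lerDl.
by rewrite sumr_ge0 // => z _; exact: trans_ge0.
Qed.

End Kernel.

Section Consensus.
Variables (R : realFieldType) (N : nat) (eta : R).
Hypotheses (eta_gt0 : 0 < eta) (eta_le1 : eta <= 1).

Lemma card_nbhd_gt0 (E : {set 'I_N * 'I_N}) (i : 'I_N) : (0 < #|nbhd E i|)%N.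
Proof. by apply/card_gt0P; exists i; rewrite inE eqxx. Qed.

Lemma vloc_const (b : bool) (E : {set 'I_N * 'I_N}) (i : 'I_N) :
  vloc R E [ffun _ => b] i = spin R b.
Proof.
rewrite /vloc (eq_bigr (fun _ => spin R b)) => [|j _]; last by rewrite ffunE.
by rewrite sumr_const -[_ *+ _]mulr_natr mulfK // pnatr_eq0 -lt0n card_nbhd_gt0.
Qed.

Lemma bit_prob_spin (b : bool) : bit_prob (pplus eta (spin R b)) b = 1.
Proof.
rewrite /pplus; case: b => /=; last by rewrite lerN2 eta_le1 subr0.
have Neta_lt1 : - eta < 1 by rewrite (lt_trans _ ltr01) // oppr_lt0.
by rewrite leNgt Neta_lt1 eta_le1.
Qed.

Lemma consensus_absorbing (b : bool) : absorbing eta ([ffun _ => b] : state N).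
Proof.
rewrite /absorbing /trans (eq_bigr (fun _ => 1)) => [|E _]; last first.
  by apply: big1 => i _; rewrite vloc_const ffunE; exact: bit_prob_spin.
rewrite sumr_const -[1 *+ _]/(_%:R) mulVf // pnatr_eq0 -lt0n.
exact: card_simple_graphs_gt0.
Qed.

End Consensus.

Section CompleteGraph.
Variables (R : realFieldType) (N : nat) (eta : R).
Hypothesis eta_gt0 : 0 < eta.

Lemma nbhd_complete (i : 'I_N) : nbhd (upper_pairs N) i = setT.
Proof.
apply/setP => j; rewrite !inE /adj !inE /=.
by case: ltngtP => //; rewrite ?orbT // => /val_inj ->; rewrite eqxx.
Qed.

(* A transition is possible as soon as it is possible on the complete graph,
   which is one of the equally likely graphs. *)
Lemma trans_gt0_complete (x y : state N) :
  (forall i, 0 < bit_prob (pplus eta (vloc R (upper_pairs N) x i)) (y i)) ->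
  0 < trans eta x y.
Proof.
move=> factor_gt0; rewrite /trans mulr_gt0 ?invr_gt0 ?ltr0n ?card_simple_graphs_gt0 //.
rewrite (bigD1 (upper_pairs N)) /=; last by rewrite inE subxx.
have prod_gt0 : 0 < \prod_i bit_prob (pplus eta (vloc R (upper_pairs N) x i)) (y i).
  by apply: prodr_gt0 => i _; exact: factor_gt0.
apply: (lt_le_trans prod_gt0).
by rewrite lerDl sumr_ge0 // => E _; apply: prodr_ge0 => i _; exact: bit_prob_ge0.
Qed.

(* From every state one of the two consensus states is reached in one step
   with positive probability: on the complete graph all nodes see the same
   average a and may all follow the sign selected by a. *)
Lemma consensus_reachable (x : state N) :
  0 < trans eta x (all_plus N) \/ 0 < trans eta x (all_minus N).
Proof.
set a : R := (\sum_(j in [set: 'I_N]) spin R (x j)) / (#|[set: 'I_N]|)%:R.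
have vloc_a i : vloc R (upper_pairs N) x i = a by rewrite /vloc nbhd_complete.
have [a_low | a_high] := leP a (- eta).
  right; apply: trans_gt0_complete => i.
  by rewrite ffunE vloc_a /= /pplus a_low subr0 ltr01.
left; apply: trans_gt0_complete => i; rewrite ffunE vloc_a /= /pplus leNgt a_high /=.
case: ifP => _; first exact: ltr01.
rewrite divr_gt0 ?mulr_gt0 //; lra.
Qed.

End CompleteGraph.

Section Transience.
Variables (R : realFieldType) (N : nat) (eta : R) (x : state N).

Lemma taboo_ge0 (n : nat) (z : state N) : 0 <= taboo eta x n z.
Proof.
elim: n z => [|n IH] z /=; first exact: trans_ge0.
by rewrite sumr_ge0 // => w _; rewrite mulr_ge0 ?IH ?trans_ge0.
Qed.

Lemma taboo_mass (n : nat) :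
  \sum_z taboo eta x n.+1 z = \sum_(w | w != x) taboo eta x n w.
Proof.
rewrite /= exchange_big /=; apply: eq_bigr => w _.
by rewrite -mulr_sumr trans_sum mulr1.
Qed.

(* Conservation of probability: after n+1 steps the chain has either
   returned to x or is still avoiding it. *)
Lemma return_plus_avoid (n : nat) :
  return_within eta x n.+1 + \sum_(w | w != x) taboo eta x n w = 1.
Proof.
rewrite /return_within; elim: n => [|n IH].
  by rewrite big_ord1 -(trans_sum eta x) [RHS](bigD1 x).
have split_at_x : taboo eta x n.+1 x + \sum_(w | w != x) taboo eta x n.+1 w =
                  \sum_z taboo eta x n.+1 z by rewrite [RHS](bigD1 x).
by rewrite big_ord_recr -addrA split_at_x taboo_mass.
Qed.

Variable t : state N.
Hypotheses (t_absorbing : absorbing eta t) (t_neq_x : t != x).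

(* The mass entering t at the first step stays there, never visiting x. *)
Lemma taboo_absorbed (n : nat) : trans eta x t <= taboo eta x n t.
Proof.
elim: n => [|n IH] //=.
rewrite (bigD1 t) //= t_absorbing mulr1; apply: (le_trans IH).
by rewrite lerDl sumr_ge0 // => w _; rewrite mulr_ge0 ?taboo_ge0 ?trans_ge0.
Qed.

Lemma transient_of_absorbing_step : 0 < trans eta x t -> transient eta x.
Proof.
move=> xt_gt0; exists (1 - trans eta x t); split; first by rewrite ltrBlDr ltrDl.
case=> [|n]; first by rewrite /return_within big_ord0 subr_ge0 trans_le1.
rewrite (canRL (addrK _) (return_plus_avoid n)) lerD2l lerN2.
apply: (le_trans (taboo_absorbed n)).
by rewrite (bigD1 t) //= lerDl sumr_ge0 // => z _; exact: taboo_ge0.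
Qed.

End Transience.

Theorem lemma3 (R : realFieldType) (N : nat) (eta : R) :
  (2 <= N)%N -> 0 < eta -> eta <= 1 ->
  absorbing eta (all_plus N) /\ absorbing eta (all_minus N) /\
  (forall x : state N, x != all_plus N -> x != all_minus N -> transient eta x).
Proof.
move=> _ eta_gt0 eta_le1.
have plus_abs : absorbing eta (all_plus N) := @consensus_absorbing R N eta eta_gt0 eta_le1 true.
have minus_abs : absorbing eta (all_minus N) := @consensus_absorbing R N eta eta_gt0 eta_le1 false.
split=> //; split=> // x x_neq_plus x_neq_minus.
have [to_plus | to_minus] := consensus_reachable eta_gt0 x.
- by apply: (transient_of_absorbing_step plus_abs); rewrite // eq_sym.
- by apply: (transient_of_absorbing_step minus_abs); rewrite // eq_sym.
Qed.
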